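(* There is a function $f(n)\in\mathcal O(n^3)$ such that in every anonymous hedonic game with $n$ agents in which all agents have strict and naturally single-peaked preferences, every sequence of IS deviations starting from any initial partition has length at most $f(n)$; in particular it terminates in an individually stable partition.
   Context: In an anonymous hedonic game on agents $N=[n]$, each agent $i$ has a weak order $\succsim_i^S$ over sizes $\{1,\dots,n\}$, and compares coalitions containing $i$ by their sizes. Strict means the orders are linear. Naturally single-peaked means: for every agent $i$ and integers $x,y,z\in[n]$ with $x>y>z$ or $z>y>x$, $x\succ_i^S y$ implies $y\succsim_i^S z$. An IS deviation of agent $i$ from partition $\pi$ to $\pi'$ is a move of $i$ alone from $\pi(i)$ into another coalition of $\pi$ or into a new singleton such that $\pi'(i)\succ_i\pi(i)$ and $\pi'(j)\succsim_j\pi(j)$ for every $j\in\pi'(i)\setminus\{i\}$. A partition is individually stable (IS) if no IS deviation is possible from it. *)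

From mathcomp Require Import all_boot.
Set Implicit Arguments. Unset Strict Implicit. Unset Printing Implicit Defensive.

(* A size-preference profile for n agents: pref i x y  means  x ≿_i^S y,
   for sizes x, y (only sizes in [1, n] are meaningful). *)
Definition size_pref (n : nat) := 'I_n -> nat -> nat -> bool.

Definition in_sizes (n x : nat) : bool := (1 <= x <= n).

Definition weak_order_pref n (pref : size_pref n) : Prop :=
  forall i : 'I_n,
    (forall x y, in_sizes n x -> in_sizes n y -> pref i x y || pref i y x) /\
    (forall x y z, in_sizes n x -> in_sizes n y -> in_sizes n z ->
        pref i x y -> pref i y z -> pref i x z).

Definition spref n (pref : size_pref n) (i : 'I_n) (x y : nat) : bool :=
  pref i x y && ~~ pref i y x.

Definition strict_pref n (pref : size_pref n) : Prop :=
  forall i : 'I_n, forall x y, in_sizes n x -> in_sizes n y ->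
    pref i x y -> pref i y x -> x = y.

Definition nat_single_peaked n (pref : size_pref n) : Prop :=
  forall (i : 'I_n) (x y z : nat),
    in_sizes n x -> in_sizes n y -> in_sizes n z ->
    ((z < y < x) || (x < y < z)) ->
    spref pref i x y -> pref i y z.

Definition is_partition n (P : {set {set 'I_n}}) : Prop :=
  partition P [set: 'I_n].

(* the partition obtained when agent i leaves its coalition and joins C
   (C \in P, or C = set0 meaning "a new singleton") *)
Definition move n (P : {set {set 'I_n}}) (i : 'I_n) (C : {set 'I_n})
  : {set {set 'I_n}} :=
  ((P :\ pblock P i) :\ C) :|:
    [set B in [set pblock P i :\ i; i |: C] | B != set0].

Definition IS_deviation n (pref : size_pref n) (P P' : {set {set 'I_n}}) : Prop :=
  exists (i : 'I_n) (C : {set 'I_n}),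
    ((C \in P /\ C != pblock P i) \/ C = set0) /\
    P' = move P i C /\
    spref pref i #|i |: C| #|pblock P i| /\
    (forall j, j \in C -> pref j #|i |: C| #|C|).

Definition individually_stable n (pref : size_pref n) (P : {set {set 'I_n}}) : Prop :=
  ~ exists P', IS_deviation pref P P'.

Definition IS_sequence n (pref : size_pref n) (P0 : {set {set 'I_n}})
  (s : seq {set {set 'I_n}}) : Prop :=
  forall k, k < size s ->
    IS_deviation pref (nth P0 (P0 :: s) k) (nth P0 (P0 :: s) k.+1).

Definition bigO_cube (f : nat -> nat) : Prop :=
  exists c N, forall n, N <= n -> f n <= c * n ^ 3.

(* For an agent j and a size t, let beaten j t be the set of smaller sizes
   that j strictly prefers t to, and give j the potential
   2n |beaten j t| + (n+1)(n-t).  Single-peakedness makes beaten j grow along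
   j's preference: if t+1 is preferred to t then beaten j t is a proper subset
   of beaten j (t+1), and beaten j t has at most one element more than
   beaten j (t-1).  Hence, when agent i leaves S for C in an IS deviation,
   every member of C gains at least n-1, every agent left in S loses at most
   n-1, and i gains more than (|S|-1-|C|)(n-1).  The total potential, bounded
   by 3n^2(n+1), therefore increases strictly along any IS sequence. *)

From mathcomp Require Import all_boot zify.
From Stdlib Require Import Classical_Prop.
Set Implicit Arguments. Unset Strict Implicit. Unset Printing Implicit Defensive.

Section SinglePeaked.
Variables (n : nat) (pref : size_pref n).
Hypotheses (prefW : weak_order_pref pref) (prefS : strict_pref pref)
  (prefSP : nat_single_peaked pref).
Variable j : 'I_n.

Local Notation sp := (spref pref j).

Lemma spref_asym x y : sp x y -> ~~ sp y x.
Proof. by rewrite /spref => /andP[-> _]; rewrite andbF. Qed.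

Lemma spref_neq x y : sp x y -> x != y.
Proof. by apply: contraTneq => ->; rewrite /spref andbN. Qed.

Lemma spref_trans x y z : in_sizes n x -> in_sizes n y -> in_sizes n z ->
  sp x y -> sp y z -> sp x z.
Proof.
move=> hx hy hz /andP[pxy npyx] /andP[pyz npzy]; have [_ trans] := prefW j.
rewrite /spref (trans x y z) //=; apply: contra npzy => pzx.
exact: (trans z x y).
Qed.

Lemma spref_total x y : in_sizes n x -> in_sizes n y -> x != y -> sp x y || sp y x.
Proof.
move=> hx hy; have [total _] := prefW j; rewrite /spref.
have := total x y hx hy; case pxy: (pref j x y); case pyx: (pref j y x) => //= _.
by rewrite (@prefS j _ _ hx hy pxy pyx) eqxx.
Qed.

Lemma spref_peak x y z : in_sizes n x -> in_sizes n y -> in_sizes n z ->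
  (z < y < x) || (x < y < z) -> sp x y -> sp y z.
Proof.
move=> hx hy hz between xy; have pyz := prefSP hx hy hz between xy.
rewrite /spref pyz /=; apply/negP => pzy; move: between.
by rewrite (@prefS j _ _ hy hz pyz pzy) ltnn andbF.
Qed.

Lemma spref_no_valley a x b : in_sizes n a -> in_sizes n x -> in_sizes n b ->
  a < x < b -> sp a b -> sp x b.
Proof.
move=> ha hx hb axb ab.
have /orP[ax|xa] : sp a x || sp x a by apply: spref_total => //; rewrite neq_ltn; lia.
- by apply: (spref_peak ha) => //; rewrite axb orbT.
- exact: (spref_trans hx ha hb).
Qed.

Definition beaten (t : nat) : {set 'I_n.+1} := [set x : 'I_n.+1 | (0 < x < t) && sp t x].

Lemma in_sizes_ord (x : 'I_n.+1) : 0 < x -> in_sizes n x.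
Proof. by move=> x0; rewrite /in_sizes x0 -ltnS ltn_ord. Qed.

Lemma card_beaten_lt a b : 0 < b -> b < a <= n -> sp a b -> #|beaten b| < #|beaten a|.
Proof.
move=> b0 /andP[ba an] ab.
have [ha hb] : in_sizes n a /\ in_sizes n b by rewrite /in_sizes; lia.
apply/proper_card/properP; split.
  apply/subsetP => x; rewrite !inE => /andP[/andP[x0 xb] bx].
  rewrite x0 (ltn_trans xb ba) /=.
  exact: (spref_trans ha hb (in_sizes_ord x0) ab).
have b_ord : b < n.+1 by lia.
by exists (inord b); rewrite !inE inordK // ?ltnn ?andbF ?b0 ?ba.
Qed.

Lemma beaten_subset a b : 0 < a -> a < b <= n -> sp a b -> beaten b \subset beaten a.
Proof.
move=> a0 /andP[ab bn] ab_pref.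
have [ha hb] : in_sizes n a /\ in_sizes n b by rewrite /in_sizes; lia.
apply/subsetP => x; rewrite !inE => /andP[/andP[x0 xb] bx].
have hx := in_sizes_ord x0.
have xa : x < a.
  rewrite ltnNge; apply/negP; rewrite leq_eqVlt => /orP[/eqP ax|ax].
    by move: bx; rewrite -ax (negbTE (spref_asym ab_pref)).
  have := spref_no_valley ha hx hb (ltac:(lia)) ab_pref.
  by move/spref_asym; rewrite bx.
by rewrite x0 xa /=; apply: (spref_trans ha hb hx).
Qed.

Lemma beaten_pred_subset t : 1 < t <= n -> beaten t \subset inord t.-1 |: beaten t.-1.
Proof.
move=> /andP[t1 tn].
have [ht ht1] : in_sizes n t /\ in_sizes n t.-1 by rewrite /in_sizes; lia.
apply/subsetP => x; rewrite !inE => /andP[/andP[x0 xt] tx].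
have hx := in_sizes_ord x0.
case: (eqVneq (x : nat) t.-1) => [xt1|xt1].
  by apply/orP; left; apply/eqP/val_inj; rewrite /= inordK //; lia.
have xt1' : x < t.-1 by lia.
rewrite x0 xt1' /=; apply/orP; right.
have /orP[t1t|tt1] : sp t.-1 t || sp t t.-1 by apply: spref_total => //; rewrite neq_ltn; lia.
- exact: (spref_trans ht1 ht hx).
- by apply: (spref_peak ht ht1 hx) => //; rewrite xt1' /=; lia.
Qed.

Definition agent_potential (t : nat) := 2 * n * #|beaten t| + n.+1 * (n - t).

Lemma card_beaten_pred t : 1 < t <= n -> #|beaten t| <= #|beaten t.-1|.+1.
Proof.
move=> t1; apply: leq_trans (subset_leq_card (beaten_pred_subset t1)) _.
by rewrite cardsU1; case: (_ \notin _).
Qed.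

Lemma agent_potential_succ c : 0 < c < n -> sp c.+1 c ->
  agent_potential c + (n - 1) <= agent_potential c.+1.
Proof.
move=> /andP[c0 cn] h; have := card_beaten_lt c0 (ltac:(lia) : c < c.+1 <= n) h.
by rewrite /agent_potential; nia.
Qed.

Lemma agent_potential_pred s : 1 < s <= n ->
  agent_potential s <= agent_potential s.-1 + (n - 1).
Proof.
by move=> s1; have := card_beaten_pred s1; rewrite /agent_potential; nia.
Qed.

Lemma agent_potential_jump s c : 0 < s <= n -> c < n -> sp c.+1 s ->
  agent_potential s + (s - 1) * (n - 1) < agent_potential c.+1 + c * (n - 1).
Proof.
move=> /andP[s0 sn] cn h; rewrite /agent_potential.
case: (ltngtP s c.+1) => [sc|cs|sc]; last by move: (spref_neq h); rewrite sc eqxx.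
- by have := card_beaten_lt s0 (ltac:(lia) : s < c.+1 <= n) h; nia.
- by have := subset_leq_card (beaten_subset (ltn0Sn c) (ltac:(lia) : c.+1 < s <= n) h); nia.
Qed.

End SinglePeaked.

Lemma agent_potential_le n (pref : size_pref n) (j : 'I_n) t :
  agent_potential pref j t <= 3 * n * n.+1.
Proof.
have := max_card (beaten pref j t); rewrite card_ord /agent_potential; nia.
Qed.

Lemma partitionU1_filter0 (T : finType) (P : {set {set T}}) (D B : {set T}) :
  partition P D -> [disjoint B & D] ->
  partition (P :|: [set X in [set B] | X != set0]) (B :|: D).
Proof.
move=> partP BD; have [-> | B0] := eqVneq B set0.
  have -> : [set X in [set set0] | X != set0] = set0 :> {set {set T}}.
    by apply/setP => X; rewrite !inE; case: eqP => // ->; rewrite eqxx.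
  by rewrite setU0 set0U.
have -> : [set X in [set B] | X != set0] = [set B].
  by apply/setP => X; rewrite !inE; case: eqP => // ->.
by rewrite setUC; apply: partitionU1.
Qed.

Section Move.
Variables (n : nat) (P : {set {set 'I_n}}) (i : 'I_n) (C : {set 'I_n}).
Hypothesis partP : is_partition P.
Hypothesis targetP : (C \in P /\ C != pblock P i) \/ C = set0.

Local Notation S := (pblock P i).

Let trivP : trivIset P. Proof. exact: partition_trivIset partP. Qed.

Let coverP j : j \in cover P.
Proof. by rewrite (cover_partition partP) inE. Qed.

Lemma mem_source : i \in S.
Proof. by rewrite mem_pblock. Qed.

Lemma pblock_source j : j \in S -> pblock P j = S.
Proof. exact: same_pblock. Qed.

Lemma disjoint_source_target : [disjoint S & C].
Proof.
case: targetP => [[CP CS] | ->]; last by rewrite disjoints_subset setC0 subsetT.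
by move/trivIsetP: trivP; apply => //; [exact: pblock_mem | rewrite eq_sym].
Qed.

Lemma notin_target : i \notin C.
Proof. by rewrite (disjointFr disjoint_source_target mem_source). Qed.

Lemma pblock_target j : j \in C -> pblock P j = C.
Proof. by case: targetP => [[CP _] | ->]; [exact: def_pblock | rewrite inE]. Qed.

Lemma partition_move : is_partition (move P i C).
Proof.
have untouched : partition ((P :\ S) :\ C) ((setT :\: S) :\: C).
  case: targetP => [[CP CS] | C0].
    by apply: partitionD1; [apply: partitionD1 => //; exact: pblock_mem | rewrite !inE CS].
  rewrite C0 setD0 (_ : _ :\ set0 = P :\ S); first by apply: partitionD1 => //; exact: pblock_mem.
  by apply/setP => X; rewrite !inE; case: eqP => // ->; rewrite (partition0 partP) andbF.
have joined_disj : [disjoint i |: C & (setT :\: S) :\: C].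
  by apply/pred0P => x /=; rewrite !inE; case: eqP => [->|_]; rewrite ?mem_source ?andbF //=; case: (x \in C).
have source_disj : [disjoint S :\ i & (i |: C) :|: ((setT :\: S) :\: C)].
  apply/pred0P => x /=; rewrite !inE; case: eqP => //= _.
  by case xS: (x \in S); rewrite //= (disjointFr disjoint_source_target xS).
have := partitionU1_filter0 (partitionU1_filter0 untouched joined_disj) source_disj.
have -> : (S :\ i) :|: ((i |: C) :|: ((setT :\: S) :\: C)) = setT.
  by apply/setP => x; rewrite !inE; case: eqP; case: (x \in S); case: (x \in C).
rewrite /is_partition /move; congr partition; apply/setP => X; rewrite !inE.
by rewrite andb_orl orbA orbAC.
Qed.

Let trivP' : trivIset (move P i C).
Proof. exact: partition_trivIset partition_move. Qed.

Lemma pblock_move_target j : j \in i |: C -> pblock (move P i C) j = i |: C.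
Proof.
apply: def_pblock => //; have nz : i |: C != set0 by apply/set0Pn; exists i; rewrite setU11.
by rewrite !inE eqxx /= nz !orbT.
Qed.

Lemma pblock_move_source j : j \in S :\ i -> pblock (move P i C) j = S :\ i.
Proof.
move=> jS; apply: def_pblock => //; have nz : S :\ i != set0 by apply/set0Pn; exists j.
by rewrite !inE eqxx /= nz !orbT.
Qed.

Lemma pblock_move_other j : j \notin S -> j \notin C -> pblock (move P i C) j = pblock P j.
Proof.
move=> jS jC; apply: def_pblock; rewrite ?mem_pblock //.
have SjS : pblock P j != S by apply: contraNneq jS => <-; rewrite mem_pblock.
have SjC : pblock P j != C by apply: contraNneq jC => <-; rewrite mem_pblock.
by rewrite !inE SjS SjC pblock_mem.
Qed.

End Move.

Definition potential n (pref : size_pref n) (P : {set {set 'I_n}}) : nat :=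
  \sum_(j : 'I_n) agent_potential pref j #|pblock P j|.

Definition potential_bound (n : nat) : nat := n * (3 * n * n.+1).

Lemma potential_le n (pref : size_pref n) P : potential pref P <= potential_bound n.
Proof.
apply: (@leq_trans (\sum_(j : 'I_n) 3 * n * n.+1)).
  by apply: leq_sum => j _; exact: agent_potential_le.
by rewrite sum_nat_const card_ord.
Qed.

Lemma sum_mem_muln (T : finType) (p : pred T) (A : {set T}) k :
  {subset A <= p} -> \sum_(j | p j) (j \in A) * k = #|A| * k.
Proof.
move=> Ap; rewrite -sum_nat_const big_mkcond [RHS]big_mkcond; apply: eq_bigr => j _.
case: ifP => [pj | pj]; case: ifP => [jA | jA]; rewrite ?jA ?mul1n //.
by move: (Ap j jA); rewrite unfold_in /= pj.
Qed.

Section Deviation.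
Variables (n : nat) (pref : size_pref n).
Hypotheses (prefW : weak_order_pref pref) (prefS : strict_pref pref)
  (prefSP : nat_single_peaked pref).
Variables (P : {set {set 'I_n}}) (i : 'I_n) (C : {set 'I_n}).
Hypothesis partP : is_partition P.
Hypothesis targetP : (C \in P /\ C != pblock P i) \/ C = set0.
Hypothesis mover_improves : spref pref i #|i |: C| #|pblock P i|.
Hypothesis target_accepts : forall j, j \in C -> pref j #|i |: C| #|C|.

Local Notation S := (pblock P i).
Local Notation V := (agent_potential pref).

Let card_joined : #|i |: C| = #|C|.+1.
Proof. by rewrite cardsU1 (notin_target partP targetP). Qed.

Let card_source : #|S| = #|S :\ i|.+1.
Proof. by rewrite (cardsD1 i S) (mem_source i partP). Qed.

Let card_le_n (A : {set 'I_n}) : #|A| <= n.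
Proof. by have := max_card A; rewrite card_ord. Qed.

Lemma agent_potential_bystander j : j != i ->
  V j #|pblock P j| + (j \in C) * (n - 1) <=
  V j #|pblock (move P i C) j| + (j \in S :\ i) * (n - 1).
Proof.
move=> ji; have jC_S := disjointFl (disjoint_source_target partP targetP).
case: (boolP (j \in C)) => jC.
  have jS : j \notin S :\ i by rewrite inE negb_and (jC_S j jC) orbT.
  rewrite (negbTE jS) (pblock_target partP targetP jC).
  rewrite (pblock_move_target partP targetP (setU1r i jC)) card_joined mul1n addn0.
  have C0 : 0 < #|C| by apply/card_gt0P; exists j.
  have Cn : #|C| < n by rewrite -card_joined card_le_n.
  apply: agent_potential_succ; rewrite ?C0 //.
  have accept := target_accepts jC; rewrite card_joined in accept.
  rewrite /spref accept /=; apply/negP => back.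
  have [inC inC1] : in_sizes n #|C| /\ in_sizes n #|C|.+1 by rewrite /in_sizes; lia.
  by have := @prefS j _ _ inC1 inC accept back; lia.
case: (boolP (j \in S :\ i)) => jS.
  rewrite (pblock_move_source partP targetP jS).
  rewrite (pblock_source partP (subsetP (subD1set S i) j jS)) card_source mul0n mul1n addn0.
  apply: agent_potential_pred => //.
  rewrite ltnS card_gt0 -card_source card_le_n andbT; apply/set0Pn; by exists j.
rewrite !mul0n !addn0 pblock_move_other //.
by move: jS; rewrite !inE ji.
Qed.

Lemma agent_potential_mover :
  V i #|S| + #|S :\ i| * (n - 1) < V i #|i |: C| + #|C| * (n - 1).
Proof.
have -> : #|S :\ i| = #|S| - 1 by rewrite card_source subn1.
rewrite card_joined; apply: agent_potential_jump => //.
- by rewrite card_le_n andbT card_gt0; apply/set0Pn; exists i; exact: mem_source.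
- by rewrite -card_joined card_le_n.
- by rewrite -card_joined.
Qed.

Lemma potential_move_gt : potential pref P < potential pref (move P i C).
Proof.
rewrite /potential (bigD1 i) // [X in _ < X](bigD1 i) //=.
rewrite (pblock_move_target partP targetP (setU11 i C)).
have : \sum_(j | j != i) (V j #|pblock P j| + (j \in C) * (n - 1)) <=
       \sum_(j | j != i) (V j #|pblock (move P i C) j| + (j \in S :\ i) * (n - 1)).
  by apply: leq_sum => j; exact: agent_potential_bystander.
rewrite big_split [X in _ <= X]big_split /= !sum_mem_muln; last 2 first.
- by move=> j; rewrite !inE => /andP[].
- by move=> j jC; rewrite unfold_in; apply: contraTneq jC => ->; rewrite (notin_target partP targetP).
move=> bystanders; have := leq_add agent_potential_mover bystanders.
by rewrite addSn addnACA [X in _ <= X]addnACA [X in _ <= _ + X]addnC ltn_add2r.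
Qed.

End Deviation.

Lemma IS_sequence_cons n (pref : size_pref n) P P' s :
  IS_deviation pref P P' -> IS_sequence pref P' s -> IS_sequence pref P (P' :: s).
Proof.
move=> dev seq_s [|k] //= ks; rewrite ltnS in ks.
by rewrite !(set_nth_default P') /= ?ltnS ?(ltnW ks) //; exact: seq_s.
Qed.

Section Dynamics.
Variables (n : nat) (pref : size_pref n).
Hypotheses (prefW : weak_order_pref pref) (prefS : strict_pref pref)
  (prefSP : nat_single_peaked pref).

Lemma IS_deviation_potential P P' : is_partition P -> IS_deviation pref P P' ->
  is_partition P' /\ potential pref P < potential pref P'.
Proof.
move=> partP [i [C [targetP [-> [improves accepts]]]]].
by split; [exact: partition_move | exact: potential_move_gt].
Qed.

Lemma IS_sequence_potential P0 s k : is_partition P0 -> IS_sequence pref P0 s ->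
  k <= size s ->
  is_partition (nth P0 (P0 :: s) k) /\ potential pref P0 + k <= potential pref (nth P0 (P0 :: s) k).
Proof.
move=> partP0 seq_s; elim: k => [|k IHk] ks; first by rewrite addn0.
have [partPk gainPk] := IHk (ltnW ks).
have [partPk1 gain] := IS_deviation_potential partPk (seq_s k ks).
by split; last by rewrite addnS; apply: leq_ltn_trans gain.
Qed.

Lemma IS_sequence_size P0 s : is_partition P0 -> IS_sequence pref P0 s ->
  size s <= potential_bound n.
Proof.
move=> partP0 seq_s; have [_ gain] := IS_sequence_potential partP0 seq_s (leqnn (size s)).
exact: leq_trans (leq_addl _ _) (leq_trans gain (potential_le _ _)).
Qed.

Lemma IS_sequence_to_stable P : is_partition P ->
  exists s, IS_sequence pref P s /\ individually_stable pref (last P s).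
Proof.
suff reach k : forall P, is_partition P -> potential_bound n - potential pref P <= k ->
    exists s, IS_sequence pref P s /\ individually_stable pref (last P s).
  by move=> partP; exact: reach partP (leqnn _).
elim: k => [|k IHk] {}P partP slack;
  have [[P' dev] | stable] := classic (exists P', IS_deviation pref P P'); try by exists [::].
all: have [partP' gain] := IS_deviation_potential partP dev; have := potential_le pref P'.
- lia.
- move=> bound; have [s [seq_s stable_s]] := IHk P' partP' (ltac:(lia)).
  by exists (P' :: s); split; first exact: IS_sequence_cons.
Qed.

End Dynamics.

Theorem theorem3p5 :
  exists f : nat -> nat, bigO_cube f /\
    forall (n : nat) (pref : size_pref n),
      weak_order_pref pref -> strict_pref pref -> nat_single_peaked pref ->
      (forall (P0 : {set {set 'I_n}}) (s : seq {set {set 'I_n}}),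
          is_partition P0 -> IS_sequence pref P0 s -> size s <= f n) /\
      (forall P0 : {set {set 'I_n}}, is_partition P0 ->
          exists s, IS_sequence pref P0 s /\
            individually_stable pref (last P0 s)).
Proof.
exists potential_bound; split.
  by exists 6, 1 => n n1; rewrite /potential_bound; nia.
move=> n pref prefW prefS prefSP; split.
- exact: IS_sequence_size.
- exact: IS_sequence_to_stable.
Qed.
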